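(* Let $c \geq 5$ be an integer, let $G$ be a graph, and let $v$ be a vertex of $G$ having a neighbor of degree $2$. Let $Y=\{v\}\cup N_{G,1}(v)\cup N_{G,2}(v)$. If $G$ has no PCF $c$-coloring, but $(G,Y)$ has a semi-PCF $c$-coloring, then $2d(v) - 2n_1(v) - n_2(v) \geq c$.
   Context: $N_{G,d}(v)$ is the set of neighbors of $v$ of degree exactly $d$ in $G$, and $n_d(v)=|N_{G,d}(v)|$; $d(v)$ is the degree of $v$ in $G$. A PCF $c$-coloring of a graph is a proper coloring with at most $c$ colors in which every non-isolated vertex has a color appearing exactly once in its open neighborhood. For $Y\subseteq V(G)$, let $Z$ be the set of vertices of $G-Y$ having degree exactly $2$ in $G-Y$. A semi-PCF $c$-coloring of $(G,Y)$ is a proper $c$-coloring $\phi$ of $G-Y$ such that every vertex of $V(G-Y)\setminus (N_G(Y)\cap Z)$ has a color appearing exactly once (under $\phi$) among its neighbors in $G-Y$. *)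

(* A finite simple graph is a symmetric irreflexive
   relation e on a finite type T. *)
From mathcomp Require Import all_boot.
Set Implicit Arguments. Unset Strict Implicit. Unset Printing Implicit Defensive.

Section Defs.
Variable T : finType.
Variable e : rel T.

Definition nbr (v : T) : {set T} := [set u | e v u].
Definition deg (v : T) : nat := #|nbr v|.

Definition nbr_deg (d : nat) (v : T) : {set T} := [set u in nbr v | deg u == d].
Definition n_deg (d : nat) (v : T) : nat := #|nbr_deg d v|.

Definition has_unique_color (c : nat) (col : T -> 'I_c) (S : {set T}) : Prop :=
  exists k : 'I_c, #|[set u in S | col u == k]| = 1.

Definition is_PCF_coloring (c : nat) (col : T -> 'I_c) : Prop :=
  (forall x y, e x y -> col x <> col y) /\
  (forall v, nbr v != set0 -> has_unique_color col (nbr v)).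

Definition nbr_del (Y : {set T}) (x : T) : {set T} := nbr x :\: Y.

Definition Zset (Y : {set T}) : {set T} :=
  [set x in ~: Y | #|nbr_del Y x| == 2].

Definition nbr_set (Y : {set T}) : {set T} := [set x | [exists y in Y, e x y]].

(* semi-PCF c-colouring of (G,Y): a proper c-colouring of G - Y (only the
   values on V(G) \ Y matter) such that every vertex of
   V(G-Y) \ (N_G(Y) ∩ Z) has a colour appearing exactly once among its
   neighbours in G - Y. *)
Definition is_semi_PCF_coloring (c : nat) (Y : {set T}) (col : T -> 'I_c) : Prop :=
  (forall x y, x \notin Y -> y \notin Y -> e x y -> col x <> col y) /\
  (forall x, x \notin Y -> x \notin (nbr_set Y :&: Zset Y) ->
     has_unique_color col (nbr_del Y x)).

End Defs.

From mathcomp Require Import all_boot zify.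
Set Implicit Arguments. Unset Strict Implicit. Unset Printing Implicit Defensive.

(* Let B be the set of neighbours of v of degree at least 3,
   so that 2 d(v) - 2 n_1(v) - n_2(v) = 2|B| + n_2(v). If c exceeds this, a
   semi-PCF colouring phi of (G, Y) extends to a PCF colouring of G that
   agrees with phi outside Y. Colour v by a colour alpha avoiding, for x in B,
   phi(x) and the unique colour of x in G - Y, and, for w in N_2(v), the
   colour of the second neighbour o(w) of w: at most 2|B| + n_2(v) colours.
   Then alpha is the unique colour around every vertex of N_1(v) and N_2(v),
   and a fixed w0 in N_2(v) gets a colour beta that makes it unique around v.
   A vertex x outside Y either keeps its unique colour of G - Y, or lies in Z:
   then its two neighbours in G - Y share a colour, and among its neighbours
   in Y (v, or degree-2 neighbours w with o(w) = x) one is given a colour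
   seen nowhere else around x. Beta avoids |B| + 3 colours and every other
   choice at most four; both fit below c since c >= 5 and c > 2|B| + 1. *)

Section FreshColor.
Variables (c : nat) (k0 : 'I_c).

Definition fresh (s : seq 'I_c) : 'I_c := odflt k0 [pick k | k \notin s].

Lemma fresh_notin s : size s < c -> fresh s \notin s.
Proof.
move=> lt_s_c; rewrite /fresh; case: pickP => [k -> // | all_in].
have : #|'I_c| <= size s.
  apply: leq_trans (card_size s); apply: subset_leq_card.
  by apply/subsetP => k _; move/negbFE: (all_in k).
by rewrite card_ord leqNgt lt_s_c.
Qed.

End FreshColor.

Section UniqueColor.
Variables (T : finType) (c : nat) (col : T -> 'I_c).

Definition unique_color (S : {set T}) : option 'I_c :=
  [pick k | #|[set u in S | col u == k]| == 1].

Lemma unique_color_Some (S : {set T}) k :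
  unique_color S = Some k -> #|[set u in S | col u == k]| = 1.
Proof. by rewrite /unique_color; case: pickP => // k' /eqP uniq_k' [<-]. Qed.

Lemma unique_color_None (S : {set T}) : unique_color S = None -> ~ has_unique_color col S.
Proof.
rewrite /unique_color; case: pickP => // no_uniq _ [k uniq_k].
by move: (no_uniq k); rewrite /= uniq_k eqxx.
Qed.

Lemma has_unique_color_witness (S : {set T}) z :
  z \in S -> {in S, forall y, y != z -> col y != col z} -> has_unique_color col S.
Proof.
move=> zS z_uniq; exists (col z); apply/eqP/cards1P; exists z.
apply/setP => y; rewrite !inE; case: (eqVneq y z) => [->|yz]; first by rewrite zS eqxx.
by apply/negbTE/nandP; case: (boolP (y \in S)) => yS; [right; exact: z_uniq | left].
Qed.

Lemma no_unique_color2 (S : {set T}) : #|S| = 2 -> ~ has_unique_color col S ->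
  {in S &, forall u w, col u = col w}.
Proof.
move=> S2 no_uniq u w uS wS; case: (eqVneq (col u) (col w)) => // neq.
case: no_uniq; apply: (has_unique_color_witness uS) => y yS yu.
have S_eq : S = [set u; w].
  have uw : u != w by apply: contraNneq neq => ->.
  by apply/esym/eqP; rewrite eqEcard S2 cards2 uw subUset !sub1set uS wS.
by move: yS yu; rewrite S_eq !inE => /orP[] /eqP->; rewrite ?eqxx // => _; rewrite eq_sym.
Qed.

End UniqueColor.

Section SimpleGraph.
Variables (T : finType) (e : rel T).

Lemma in_nbr x y : (y \in nbr e x) = e x y.
Proof. by rewrite /nbr inE. Qed.

Lemma in_nbr_deg d x y : (y \in nbr_deg e d x) = e x y && (deg e y == d).
Proof. by rewrite /nbr_deg inE in_nbr. Qed.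

Lemma in_nbr_del Y x y : (y \in nbr_del e Y x) = (y \notin Y) && e x y.
Proof. by rewrite /nbr_del inE in_nbr. Qed.

Lemma deg_split v : deg e v =
  #|nbr e v :\: (nbr_deg e 1 v :|: nbr_deg e 2 v)| + n_deg e 1 v + n_deg e 2 v.
Proof.
have sub12 : nbr_deg e 1 v :|: nbr_deg e 2 v \subset nbr e v.
  by apply/subsetP => u; rewrite inE !in_nbr_deg in_nbr => /orP[]/andP[].
have disj12 : nbr_deg e 1 v :&: nbr_deg e 2 v = set0.
  by apply/setP => u; rewrite in_setI in_set0 !in_nbr_deg; case: eqP => [->|_]; rewrite ?andbF.
rewrite /deg -(cardsID (nbr_deg e 1 v :|: nbr_deg e 2 v) (nbr e v)) (setIidPr sub12).
by rewrite cardsU disj12 cards0 subn0 /n_deg addnC addnA.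
Qed.

Lemma deg1_nbr u v y : deg e u = 1 -> e u v -> e u y -> y = v.
Proof.
move=> /eqP/cards1P[z Nu] euv euy.
by move: (in_nbr u v) (in_nbr u y); rewrite Nu euv euy !inE => /eqP-> /eqP->.
Qed.

Definition other_nbr v w := odflt v [pick u in nbr e w :\ v].

Lemma other_nbrP v w : deg e w = 2 -> e w v ->
  [/\ other_nbr v w != v, e w (other_nbr v w)
    & forall y, e w y -> y = v \/ y = other_nbr v w].
Proof.
move=> dw ewv.
have : #|nbr e w :\ v| == 1.
  by move: (cardsD1 v (nbr e w)); rewrite in_nbr ewv -/(deg e w) dw add1n => -[<-].
case/cards1P => z Nwv.
have -> : other_nbr v w = z.
  by rewrite /other_nbr; case: pickP => [u | /(_ z)]; rewrite Nwv !inE ?eqxx // => /eqP.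
have := set11 z; rewrite -Nwv in_setD1 in_nbr => /andP[zv ewz]; split=> // y ewy.
case: (eqVneq y v) => [|yv]; [by left | right].
by apply/set1P; rewrite -Nwv in_setD1 yv in_nbr.
Qed.

End SimpleGraph.

Section Recoloring.
Variables (T : finType) (e : rel T).
Hypotheses (e_sym : symmetric e) (e_irr : irreflexive e).
Variables (c : nat) (v w0 : T) (phi : T -> 'I_c).

Local Notation N1 := (nbr_deg e 1 v).
Local Notation N2 := (nbr_deg e 2 v).
Local Notation B := (nbr e v :\: (N1 :|: N2)).
Local Notation Y := (v |: (N1 :|: N2)).
Local Notation o := (other_nbr e v).
Local Notation avoid := (fresh (phi v)).

Hypothesis semi : is_semi_PCF_coloring e Y phi.
Hypothesis w0_N2 : w0 \in N2.
Hypothesis c_ge5 : 5 <= c.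
Hypothesis c_large : 2 * #|B| + #|N2| < c.

Lemma inY u : (u \in Y) = [|| u == v, u \in N1 | u \in N2].
Proof. by rewrite in_setU1 in_setU. Qed.

Lemma notin_Y u : u \notin Y -> [/\ u != v, u \notin N1 & u \notin N2].
Proof. by rewrite inY !negb_or => /and3P. Qed.

Lemma nbr_v_neq u : e v u -> u != v.
Proof. by apply: contraTneq => ->; rewrite e_irr. Qed.

Lemma nbr_deg_neq d u : u \in nbr_deg e d v -> u != v.
Proof. by rewrite in_nbr_deg => /andP[/nbr_v_neq]. Qed.

Lemma B_notin_Y x : x \in B -> x \notin Y.
Proof.
rewrite in_setD in_setU negb_or in_nbr => /andP[/andP[xN1 xN2] evx].
by rewrite inY (negbTE (nbr_v_neq evx)) (negbTE xN1) (negbTE xN2).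
Qed.

Lemma inB x : e v x -> x \notin N1 -> x \notin N2 -> x \in B.
Proof. by move=> evx xN1 xN2; rewrite in_setD in_setU (negbTE xN1) (negbTE xN2) in_nbr. Qed.

Lemma v_in_nbr d u : u \in nbr_deg e d v -> v \in nbr e u.
Proof. by rewrite in_nbr_deg in_nbr e_sym => /andP[]. Qed.

Lemma N2_notin_N1 w : w \in N2 -> w \notin N1.
Proof. by rewrite !in_nbr_deg => /andP[_ /eqP->]; rewrite andbF. Qed.

Lemma N2_other w : w \in N2 ->
  [/\ o w != v, e w (o w) & forall y, e w y -> y = v \/ y = o w].
Proof. by rewrite in_nbr_deg e_sym => /andP[ewv /eqP dw]; apply: other_nbrP. Qed.

Lemma N1_nbr u y : u \in N1 -> e u y -> y = v.
Proof. by rewrite in_nbr_deg e_sym => /andP[euv /eqP du]; apply: deg1_nbr. Qed.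

Lemma adj_Y x y : x \notin Y -> y \in Y -> e x y ->
  (y = v /\ x \in B) \/ (y \in N2 /\ o y = x).
Proof.
move=> xY; have [xv xN1 xN2] := notin_Y xY.
rewrite inY => /or3P[/eqP-> | yN1 | yN2] exy.
- by left; split=> //; apply: inB; rewrite // e_sym.
- by move: xv; rewrite (N1_nbr yN1 (_ : e y x)) ?eqxx // e_sym.
- right; split=> //; have [_ _ nbr_y] := N2_other yN2.
  by case: (nbr_y x); rewrite 1?e_sym // => xv'; move: xv; rewrite xv' eqxx.
Qed.

Lemma other_in_Y w : w \in N2 -> o w \in Y -> o w \in N2 /\ o (o w) = w.
Proof.
move=> wN2 owY; have [ov ewo _] := N2_other wN2.
have owN2 : o w \in N2.
  move: owY; rewrite inY (negbTE ov) /= => /orP[owN1|//].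
  have wv : w = v by apply: (N1_nbr owN1); rewrite e_sym.
  by move: (nbr_deg_neq wN2); rewrite wv eqxx.
split=> //; have [_ _ nbr_ow] := N2_other owN2.
case: (nbr_ow w); rewrite 1?e_sym // => wv.
by move: (nbr_deg_neq wN2); rewrite wv eqxx.
Qed.

Definition wit x := unique_color phi (nbr_del e Y x).

(* A colour of a neighbour of [x] in G - Y that is unique there if some colour
   is; when none is and [x] is in Z, its two neighbours there share it. *)
Definition key x := odflt (phi (odflt x [pick u in nbr_del e Y x])) (wit x).

Definition alpha := avoid
  ([seq phi x | x <- enum B] ++ [seq key x | x <- enum B] ++ [seq phi (o w) | w <- enum N2]).

Lemma alpha_facts :
  [/\ {in B, forall x, alpha != phi x}, {in B, forall x, alpha != key x}
    & {in N2, forall w, alpha != phi (o w)}].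
Proof.
have : alpha \notin [seq phi x | x <- enum B] ++ [seq key x | x <- enum B] ++
                    [seq phi (o w) | w <- enum N2].
  by apply: fresh_notin; rewrite !size_cat !size_map -!cardE; lia.
rewrite !mem_cat !negb_or => /and3P[not_phi not_key not_phio].
by split=> x xA; [move: not_phi | move: not_key | move: not_phio];
  apply: contraNneq => ->; apply: map_f; rewrite mem_enum.
Qed.

Definition beta := avoid [:: alpha, phi (o w0), key (o w0) & [seq phi x | x <- enum B]].

Lemma beta_facts : [/\ beta != alpha, beta != phi (o w0), beta != key (o w0)
  & {in B, forall x, beta != phi x}].
Proof.
have : beta \notin [:: alpha, phi (o w0), key (o w0) & [seq phi x | x <- enum B]].
  have : 0 < #|N2| by apply/card_gt0P; exists w0.
  by move=> N2_gt0; apply: fresh_notin; rewrite /= size_map -cardE; lia.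
rewrite !inE !negb_or => /and4P[-> -> -> not_phi]; split=> // x xB.
by apply: contraNneq not_phi => ->; apply: map_f; rewrite mem_enum.
Qed.

Definition t1 := avoid [:: alpha; beta].
Definition t2 := avoid [:: alpha; beta; t1].

Lemma t_facts : [/\ t1 != alpha, t1 != beta, t2 != alpha, t2 != beta & t2 != t1].
Proof.
have : t1 \notin [:: alpha; beta] by apply: fresh_notin => /=; lia.
have : t2 \notin [:: alpha; beta; t1] by apply: fresh_notin => /=; lia.
by rewrite !inE !negb_or => /and3P[-> -> ->] /andP[-> ->].
Qed.

Definition d1 x := if o w0 == x then beta else avoid [:: alpha; beta; phi x; key x].
Definition d2 x := avoid [:: alpha; beta; phi x; odflt (d1 x) (wit x)].
Definition desig x := if o w0 == x then w0 else odflt w0 [pick w in N2 | e x w].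

Lemma d1_facts x :
  [/\ d1 x != alpha, d1 x != phi x, d1 x != key x & (o w0 != x -> d1 x != beta)].
Proof.
rewrite /d1; case: (eqVneq (o w0) x) => [<- | _].
  by have [ba bp bk _] := beta_facts; split; rewrite ?eqxx.
have : avoid [:: alpha; beta; phi x; key x] \notin [:: alpha; beta; phi x; key x].
  by apply: fresh_notin => /=; lia.
by rewrite !inE !negb_or => /and4P[-> -> -> ->].
Qed.

Lemma d2_facts x :
  [/\ d2 x != alpha, d2 x != beta, d2 x != phi x & d2 x != odflt (d1 x) (wit x)].
Proof.
have : d2 x \notin [:: alpha; beta; phi x; odflt (d1 x) (wit x)].
  by apply: fresh_notin => /=; lia.
by rewrite !inE !negb_or => /and4P[-> -> -> ->].
Qed.

(* A degree-2 neighbour [w] whose other neighbour is also in N2 lies on a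
   triangle with [v]; the two are told apart by their rank in [T]. *)
Definition colN2 w :=
  if w == w0 then beta
  else if o w \in N2 then (if enum_rank w < enum_rank (o w) then t1 else t2)
  else if w == desig (o w) then d1 (o w) else d2 (o w).

Definition col u :=
  if u == v then alpha else if u \in N1 then t1 else if u \in N2 then colN2 u else phi u.

Lemma col_v : col v = alpha.
Proof. by rewrite /col eqxx. Qed.

Lemma col_N1 u : u \in N1 -> col u = t1.
Proof. by move=> uN1; rewrite /col uN1 (negbTE (nbr_deg_neq uN1)). Qed.

Lemma col_N2 w : w \in N2 -> col w = colN2 w.
Proof.
by move=> wN2; rewrite /col wN2 (negbTE (N2_notin_N1 wN2)) (negbTE (nbr_deg_neq wN2)).
Qed.

Lemma col_out x : x \notin Y -> col x = phi x.
Proof. by case/notin_Y => xv xN1 xN2; rewrite /col (negbTE xv) (negbTE xN1) (negbTE xN2). Qed.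

Lemma colN2_alpha w : colN2 w != alpha.
Proof.
have [t1a _ t2a _ _] := t_facts; have [ba _ _ _] := beta_facts.
rewrite /colN2; case: ifP => _ //; case: ifP => _; first by case: ifP.
by case: ifP => _; [have [] := d1_facts (o w) | have [] := d2_facts (o w)].
Qed.

Lemma colN2_beta w : w != w0 -> colN2 w != beta.
Proof.
move=> ww0; have [_ t1b _ t2b _] := t_facts.
rewrite /colN2 (negbTE ww0); case: ifP => _; first by case: ifP.
case: ifP => [/eqP w_desig | _]; last by have [] := d2_facts (o w).
have [_ _ _ ->] // := d1_facts (o w).
by apply: contra ww0 => /eqP ow0; rewrite w_desig /desig ow0 eqxx.
Qed.

Lemma colN2_out_phi w : o w \notin Y -> colN2 w != phi (o w).
Proof.
move=> owY; have [_ _ owN2] := notin_Y owY.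
rewrite /colN2; case: (eqVneq w w0) => [-> | _]; first by have [] := beta_facts.
rewrite (negbTE owN2).
by case: ifP => _; [have [] := d1_facts (o w) | have [] := d2_facts (o w)].
Qed.

Lemma colN2_out_wit w k : o w \notin Y -> wit (o w) = Some k -> colN2 w != k.
Proof.
move=> owY wit_k; have [_ _ owN2] := notin_Y owY.
have key_k : key (o w) = k by rewrite /key wit_k.
rewrite -key_k /colN2; case: (eqVneq w w0) => [-> | _]; first by have [] := beta_facts.
rewrite (negbTE owN2); case: ifP => _; first by have [] := d1_facts (o w).
by have [_ _ _] := d2_facts (o w); rewrite wit_k key_k.
Qed.

Lemma colN2_triangle w : w \in N2 -> o w \in N2 -> colN2 w != colN2 (o w).
Proof.
move=> wN2 owN2; have [_ ewo _] := N2_other wN2.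
have owY : o w \in Y by rewrite inY owN2 !orbT.
have [_ oow] := other_in_Y wN2 owY.
have ow_neq_w : o w != w by apply: contraTneq ewo => ->; rewrite e_irr.
have [t1a t1b t2a t2b t21] := t_facts.
rewrite /colN2 oow wN2 owN2.
case: (eqVneq w w0) => [ww0 | _].
  by rewrite -ww0 (negbTE ow_neq_w); case: ifP => _; rewrite eq_sym.
case: (eqVneq (o w) w0) => [_ | _]; first by case: ifP.
case: ltngtP => [_ | _ // | /val_inj/enum_rank_inj w_eq_ow]; first by rewrite eq_sym.
by move: ow_neq_w; rewrite -w_eq_ow eqxx.
Qed.

Lemma col_neq_Y x y : e x y -> y \in Y -> col x != col y.
Proof.
have [t1a _ _ _ _] := t_facts.
move=> exy; rewrite inY => /or3P[/eqP yv | yN1 | yN2].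
- rewrite yv col_v; rewrite yv e_sym in exy.
  case: (boolP (x \in N1)) => xN1; first by rewrite col_N1.
  case: (boolP (x \in N2)) => xN2; first by rewrite col_N2 // colN2_alpha.
  have xB := inB exy xN1 xN2; have [aB _ _] := alpha_facts.
  by rewrite col_out ?B_notin_Y // eq_sym aB.
- have -> : x = v by apply: (N1_nbr yN1); rewrite e_sym.
  by rewrite col_v col_N1 // eq_sym.
- have [_ _ nbr_y] := N2_other yN2.
  case: (nbr_y x); rewrite 1?e_sym // => ->; first by rewrite col_v col_N2 // eq_sym colN2_alpha.
  case: (boolP (o y \in Y)) => oyY.
  + have [oyN2 _] := other_in_Y yN2 oyY.
    by rewrite !col_N2 // eq_sym colN2_triangle.
  + by rewrite col_out // col_N2 // eq_sym colN2_out_phi.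
Qed.

Lemma col_proper x y : e x y -> col x <> col y.
Proof.
move=> exy; apply/eqP.
case: (boolP (y \in Y)) => yY; first exact: col_neq_Y.
case: (boolP (x \in Y)) => xY; first by rewrite eq_sym col_neq_Y // e_sym.
by rewrite !col_out //; apply/eqP; exact: semi.1 x y xY yY exy.
Qed.

Lemma unique_at_v : has_unique_color col (nbr e v).
Proof.
have w0_v : w0 \in nbr e v by move: w0_N2; rewrite in_nbr_deg in_nbr => /andP[].
apply: (has_unique_color_witness w0_v) => u; rewrite in_nbr => evu uw0.
rewrite (col_N2 w0_N2) /colN2 eqxx.
case: (boolP (u \in N1)) => uN1; first by rewrite col_N1 //; have [] := t_facts.
case: (boolP (u \in N2)) => uN2; first by rewrite col_N2 // colN2_beta.
have uB := inB evu uN1 uN2; have [_ _ _ bB] := beta_facts.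
by rewrite col_out ?B_notin_Y // eq_sym bB.
Qed.

Lemma unique_at_N1 u : u \in N1 -> has_unique_color col (nbr e u).
Proof.
move=> uN1; apply: (has_unique_color_witness (v_in_nbr uN1)) => y.
by rewrite in_nbr => /(N1_nbr uN1)->; rewrite eqxx.
Qed.

Lemma unique_at_N2 w : w \in N2 -> has_unique_color col (nbr e w).
Proof.
move=> wN2; have [_ _ nbr_w] := N2_other wN2.
apply: (has_unique_color_witness (v_in_nbr wN2)) => y.
rewrite in_nbr col_v => /nbr_w[-> | ->]; rewrite ?eqxx // => _.
case: (boolP (o w \in Y)) => owY.
- by have [owN2 _] := other_in_Y wN2 owY; rewrite col_N2 // colN2_alpha.
- by have [_ _ aN2] := alpha_facts; rewrite col_out // eq_sym aN2.
Qed.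

Lemma no_wit_key x : x \notin Y -> wit x = None ->
  x \in nbr_set e Y /\ {in nbr_del e Y x, forall u, phi u = key x}.
Proof.
move=> xY wit_none; have no_uniq := unique_color_None wit_none.
have /setIP[xNY] : x \in nbr_set e Y :&: Zset e Y.
  by apply/negPn/negP => xNZ; apply: no_uniq; exact: semi.2 x xY xNZ.
rewrite inE => /andP[_ /eqP deg2]; split=> // u u_nbr.
rewrite /key wit_none /=; case: pickP => [p p_nbr | /(_ u)]; last by rewrite u_nbr.
exact: (no_unique_color2 deg2 no_uniq).
Qed.

Lemma unique_at_out_wit x k : x \notin Y -> wit x = Some k -> has_unique_color col (nbr e x).
Proof.
move=> xY wit_k; have /eqP/cards1P[z zk] := unique_color_Some wit_k.
have := set11 z; rewrite -zk inE in_nbr_del => /andP[/andP[zY exz] /eqP phiz].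
have z_x : z \in nbr e x by rewrite in_nbr.
apply: (has_unique_color_witness z_x) => y; rewrite in_nbr (col_out zY) phiz => exy yz.
case: (boolP (y \in Y)) => yY.
- case: (adj_Y xY yY exy) => [[-> xB] | [yN2 oy]].
    by have [_ aB _] := alpha_facts; move: (aB x xB); rewrite col_v /key wit_k.
  by rewrite col_N2 // colN2_out_wit // oy.
- rewrite col_out //; apply: contra yz => /eqP phiy.
  by apply/eqP/set1P; rewrite -zk inE in_nbr_del yY exy phiy eqxx.
Qed.

Lemma unique_at_out_B x : x \notin Y -> wit x = None -> [set w in N2 | e x w] = set0 ->
  has_unique_color col (nbr e x).
Proof.
move=> xY wit_none noN2; have [xNY same] := no_wit_key xY wit_none.
have notN2 y : e x y -> y \notin N2.
  by move=> exy; apply/negP => yN2; move/setP/(_ y): noN2; rewrite in_set0 in_set yN2 exy.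
have xB : x \in B.
  move: xNY; rewrite inE => /existsP[y /andP[yY exy]].
  by case: (adj_Y xY yY exy) => [[_ //] | [yN2 _]]; move: (notN2 y exy); rewrite yN2.
have v_x : v \in nbr e x by case/setDP: xB; rewrite !in_nbr e_sym.
apply: (has_unique_color_witness v_x) => y; rewrite in_nbr col_v => exy yv.
case: (boolP (y \in Y)) => yY.
- case: (adj_Y xY yY exy) => [[yv' _] | [yN2 _]]; first by rewrite yv' eqxx in yv.
  by move: (notN2 y exy); rewrite yN2.
- have [_ aB _] := alpha_facts.
  by rewrite col_out // (same y) ?in_nbr_del ?yY ?exy // eq_sym aB.
Qed.

Lemma unique_at_out_desig x w : x \notin Y -> wit x = None -> w \in N2 -> e x w ->
  has_unique_color col (nbr e x).
Proof.
move=> xY wit_none wN2 exw; have [_ same] := no_wit_key xY wit_none.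
have [xv _ xN2] := notin_Y xY.
have /andP[zN2 exz] : (desig x \in N2) && e x (desig x).
  rewrite /desig; case: (eqVneq (o w0) x) => [<- | _].
    by have [_ ew0 _] := N2_other w0_N2; rewrite w0_N2 e_sym.
  by case: pickP => [w' -> // | /(_ w)]; rewrite wN2 exw.
have oz : o (desig x) = x.
  have [_ _ nbr_z] := N2_other zN2.
  by case: (nbr_z x); rewrite 1?e_sym // => xv'; rewrite xv' eqxx in xv.
have col_z : col (desig x) = d1 x.
  rewrite col_N2 // /colN2 oz (negbTE xN2) eqxx.
  by case: (eqVneq (desig x) w0) => // zw0; rewrite /d1 -oz zw0 eqxx.
have z_x : desig x \in nbr e x by rewrite in_nbr.
apply: (has_unique_color_witness z_x) => y; rewrite in_nbr col_z => exy yz.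
have [d1a d1p d1k _] := d1_facts x.
case: (boolP (y \in Y)) => yY.
- case: (adj_Y xY yY exy) => [[-> _] | [yN2 oy]]; first by rewrite col_v eq_sym.
  have yw0 : y != w0.
    by apply: contra yz => /eqP yw0; rewrite /desig -oy yw0 eqxx.
  rewrite col_N2 // /colN2 (negbTE yw0) oy (negbTE xN2) (negbTE yz).
  by have [_ _ _] := d2_facts x; rewrite wit_none.
- by rewrite col_out // (same y) ?in_nbr_del ?yY ?exy // eq_sym.
Qed.

Lemma unique_at_out x : x \notin Y -> has_unique_color col (nbr e x).
Proof.
move=> xY; case wit_x: (wit x) => [k|]; first exact: unique_at_out_wit wit_x.
case: (set_0Vmem [set w in N2 | e x w]) => [noN2 | [w]]; first exact: unique_at_out_B.
by rewrite inE => /andP[wN2 exw]; exact: unique_at_out_desig wN2 exw.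
Qed.

Lemma col_PCF : is_PCF_coloring e col.
Proof.
split=> [x y | x _]; first exact: col_proper.
case: (boolP (x \in Y)) => [| xY]; last exact: unique_at_out.
by rewrite inY => /or3P[/eqP-> | xN1 | xN2];
  [exact: unique_at_v | exact: unique_at_N1 | exact: unique_at_N2].
Qed.

End Recoloring.

Theorem mainTheorem6 (c : nat) (T : finType) (e : rel T)
  (e_sym : symmetric e) (e_irr : irreflexive e) (v : T) :
  5 <= c ->
  (exists u, e v u /\ deg e u = 2) ->
  let Y := v |: (nbr_deg e 1 v :|: nbr_deg e 2 v) in
  ~ (exists col : T -> 'I_c, is_PCF_coloring e col) ->
  (exists col : T -> 'I_c, is_semi_PCF_coloring e Y col) ->
  c + 2 * n_deg e 1 v + n_deg e 2 v <= 2 * deg e v.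
Proof.
move=> c_ge5 [w0 [e_vw0 deg_w0]] Y no_PCF [phi semi].
rewrite leqNgt; apply/negP => c_large; apply: no_PCF.
have w0_N2 : w0 \in nbr_deg e 2 v by rewrite in_nbr_deg e_vw0 deg_w0 eqxx.
exists (col e v w0 phi); apply: col_PCF => //.
by move: c_large; rewrite (deg_split e v) /n_deg; lia.
Qed.
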